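(* Let $n\ge1$ be even and let $\mathcal{D}_{S_1},\mathcal{D}_{S_2}\subseteq\mathcal{D}_{[n]}\setminus\{n\}$ be such that $\mathrm{ICG}(n,\mathcal{D}_{S_1})$ and $\mathrm{ICG}(n,\mathcal{D}_{S_2})$ are isospectral. Then (a) $\sum_{d\in\mathcal{D}_{S_1},\ d\text{ odd}}\phi(n/d)=\sum_{d\in\mathcal{D}_{S_2},\ d\text{ odd}}\phi(n/d)$, and (b) $\sum_{d\in\mathcal{D}_{S_1},\ d\text{ even}}\phi(n/d)=\sum_{d\in\mathcal{D}_{S_2},\ d\text{ even}}\phi(n/d)$.
   Context: Identify $\mathbb{Z}_n$ with $[n]=\{1,\dots,n\}$. For a divisor $d$ of $n$, $G_n(d)=\{j\in[n]:\gcd(j,n)=d\}$; $\mathcal{D}_{[n]}$ is the set of positive divisors of $n$. For $\mathcal{D}\subseteq\mathcal{D}_{[n]}\setminus\{n\}$, $\mathrm{ICG}(n,\mathcal{D})=\mathrm{Cay}(\mathbb{Z}_n,S)$ with $S=\bigcup_{d\in\mathcal{D}}G_n(d)$, and $\mathcal{D}=\mathcal{D}_S$. $\phi$ is Euler's totient function. Isospectral means having the same multiset of adjacency eigenvalues. *)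

From mathcomp Require Import all_boot all_order all_algebra all_field.
Set Implicit Arguments. Unset Strict Implicit. Unset Printing Implicit Defensive.
Import GRing.Theory Num.Theory.
Local Open Scope ring_scope.

(* Vertices of Z_n are represented by 'I_n (residues 0..n-1; residue 0 plays
   the role of n in [n]).  ICG(n, D) = Cay(Z_n, S), S = {k : gcd(k,n) \in D},
   so i ~ j iff gcd((j - i) mod n, n) \in D.  Note gcdn 0 n = n. *)
Definition ICG_adj (n : nat) (D : pred nat) : 'M[algC]_n :=
  \matrix_(i < n, j < n) ((D (gcdn ((j + n - i) %% n) n)) : nat)%:R.

Definition proper_divisor_set (n : nat) (D : pred nat) : Prop :=
  forall d, D d -> (d %| n)%N && (d != n).

Definition isospectral (n : nat) (A B : 'M[algC]_n) : Prop :=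
  forall x : algC, mup x (char_poly A) = mup x (char_poly B).

From mathcomp Require Import all_boot all_order all_algebra all_field zify.
Set Implicit Arguments. Unset Strict Implicit. Unset Printing Implicit Defensive.

(* The adjacency matrix of ICG(n, D) is the circulant of the indicator g of
   its connection set S, so its eigenvalues are l_k = \sum_t g t w^(t k) for a
   primitive n-th root of unity w.  The eigenvalue l_0 = #|S| dominates all
   others in modulus, hence is determined by the spectrum.  As S = -S we have
   l_k = l_(n-k), so the multiplicity of any x has the parity of
   [l_0 = x] + [l_(n/2) = x]; this pins down l_(n/2), the number of even
   minus the number of odd elements of S.  Finally, for n even the t with
   gcd(t, n) = d have the parity of d and there are phi(n/d) of them. *)

Lemma odd_gcdn_evenr t n : ~~ odd n -> odd (gcdn t n) = odd t.
Proof.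
move=> n_even; apply: negb_inj; rewrite -!dvdn2 dvdn_gcd.
by rewrite [2 %| n]dvdn2 n_even andbT.
Qed.

Lemma sum_nat_multiples d m (F : nat -> nat) : 0 < d ->
  \sum_(0 <= t < d * m) (d %| t) * F t = \sum_(0 <= u < m) F (d * u).
Proof.
move=> d_gt0; elim: m => [|m IHm]; first by rewrite muln0 !big_geq.
rewrite big_nat_recr //= -IHm mulnS addnC.
rewrite (@big_cat_nat _ _ _ (d * m)) ?leq_addr //=; congr (_ + _).
rewrite big_ltn; last lia.
rewrite dvdn_mulr // mul1n big1_seq ?addn0 // => t.
rewrite mem_index_iota => /andP[_ /andP[lt_dm_t lt_t]].
have [dvd_d_t|] := boolP (d %| t); last by rewrite mul0n.
have : d %| t - d * m by rewrite dvdn_sub // dvdn_mulr.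
by move/dvdn_leq; lia.
Qed.

Lemma card_gcdn_eq n d : 0 < n -> d %| n ->
  \sum_(t < n) (gcdn t n == d) = totient (n %/ d).
Proof.
move=> n_gt0 dvd_d_n; have d_gt0 : 0 < d by apply: dvdn_gt0 dvd_d_n; lia.
have n_eq : n = d * (n %/ d) by rewrite mulnC divnK.
rewrite totient_count_coprime -(big_mkord xpredT (fun t => (gcdn t n == d) : nat)).
transitivity (\sum_(0 <= t < n) (d %| t) * (gcdn t n == d)).
  apply: eq_bigr => t _; have [<-|] := eqVneq (gcdn t n) d; last by rewrite muln0.
  by rewrite dvdn_gcdl.
rewrite {1}n_eq sum_nat_multiples //; apply: eq_bigr => u _.
by rewrite {1}n_eq -muln_gcdr -{3}[d]muln1 eqn_pmul2l // gcdnC.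
Qed.

(* [Q] selects a parity: [id] counts odd [t], [negb] even ones. *)
Definition nbrs_count (n : nat) (D : pred nat) (Q : pred bool) : nat :=
  \sum_(t < n) (D (gcdn t n) && Q (odd t)).

Lemma sum_totient_gcdn n (D : pred nat) (Q : pred bool) :
  0 < n -> ~~ odd n -> (forall d, D d -> d %| n) ->
  \sum_(d < n.+1 | D d && Q (odd d)) totient (n %/ d) = nbrs_count n D Q.
Proof.
move=> n_gt0 n_even D_dvd.
have gcdn_lt (t : 'I_n) : gcdn t n < n.+1 by rewrite ltnS dvdn_leq ?dvdn_gcdr.
under [RHS]eq_bigr => t _ do rewrite -(odd_gcdn_evenr t n_even).
rewrite (partition_big (fun t : 'I_n => inord (gcdn t n) : 'I_n.+1) xpredT) //=.
rewrite big_mkcond /=; apply: eq_bigr => d _.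
transitivity (\sum_(t < n | gcdn t n == d) (D d && Q (odd d)) : nat); last first.
  apply: eq_big => t; last by move/eqP <-.
  by rewrite -val_eqE /= inordK.
case: ifP => [/andP[Dd _]|_]; last by rewrite big1.
rewrite -(card_gcdn_eq n_gt0 (D_dvd d Dd)) [RHS]big_mkcond.
by apply: eq_bigr => t _; case: eqP.
Qed.

Lemma odd_sum_sym (G : nat -> nat) h :
  (forall k, k <= h.*2 -> G (h.*2 - k) = G k) ->
  odd (\sum_(k < h.*2) G k) = odd (G 0 + G h).
Proof.
case: h => [|h] G_sym; first by rewrite big_ord0 addnn odd_double.
rewrite -addnn big_split_ord /=.
have -> : \sum_(k < h.+1) G (h.+1 + k) = \sum_(k < h.+1) G k.+1.
  rewrite (reindex_inj rev_ord_inj); apply: eq_bigr => k _ /=.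
  rewrite -G_sym -?addnn; last lia.
  by congr G; have := ltn_ord k; lia.
rewrite [X in X + _]big_ord_recl [X in _ + X]big_ord_recr /= !oddD.
have -> : \sum_(i < h) G (bump 0 i) = \sum_(i < h) G i.+1 by [].
by case: (odd (\sum_(i < h) G i.+1)); case: (odd (G 0)); case: (odd (G h.+1)).
Qed.

Lemma eq_of_odd_indicator (T : eqType) (a b c : T) :
  (forall x, odd ((a == x) + (b == x)) = odd ((a == x) + (c == x))) -> b = c.
Proof.
move=> /(_ b); rewrite eqxx; case: (c =P b) => [-> //|_].
by rewrite addn1 addn0; case: (a == b).
Qed.

Import Order.Theory GRing.Theory Num.Theory.
Local Open Scope ring_scope.

Definition circ_symmetric (n : nat) (g : nat -> algC) : Prop :=
  forall t, (t < n)%N -> g ((n - t) %% n)%N = g t.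

Section Circulant.

Variables (n : nat) (w : algC) (g : nat -> algC).
Hypotheses (n_gt0 : (0 < n)%N) (w_prim : n.-primitive_root w).

Definition circulant : 'M[algC]_n := \matrix_(i < n, j < n) g ((j + n - i) %% n).

Definition circ_eigen (k : nat) : algC := \sum_(t < n) g t * w ^+ (t * k).

Definition dft_mx : 'M[algC]_n := \matrix_(j < n, k < n) w ^+ (j * k).

Lemma circulant_dft : circulant *m dft_mx = dft_mx *m diag_mx (\row_(k < n) circ_eigen k).
Proof.
apply/matrixP => i k; rewrite mul_mx_diag !mxE mulr_sumr.
pose shift (t : 'I_n) : 'I_n := Ordinal (ltn_pmod (i + t) n_gt0).
have shift_inj : injective shift.
  move=> t1 t2 /(congr1 val) /= /eqP; rewrite eqn_modDl !modn_small // => /eqP.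
  exact: val_inj.
rewrite (reindex_inj shift_inj); apply: eq_bigr => t _; rewrite !mxE /=.
have -> : (((i + t) %% n + n - i) %% n = t)%N.
  have [lt_in lt_tn] := (ltn_ord i, ltn_ord t).
  rewrite -addnBA 1?ltnW // modnDml -addnA addnBA 1?ltnW //.
  by rewrite addnBA; [rewrite addnC addnK modnDr modn_small | lia].
by rewrite mulrCA -exprD -mulnDl !exprM (prim_expr_mod w_prim).
Qed.

Lemma dft_unitmx : dft_mx \in unitmx.
Proof.
have -> : dft_mx = Vandermonde n (\row_(k < n) w ^+ k).
  by apply/matrixP => i j; rewrite !mxE -exprM mulnC.
rewrite unitmxE det_Vandermonde unitfE; apply/prodf_neq0 => i _.
rewrite prodf_seq_neq0; apply/allP => j _; apply/implyP => lt_ij.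
by rewrite !mxE subr_eq0 (eq_prim_root_expr w_prim) !modn_small // neq_ltn lt_ij orbT.
Qed.

Lemma char_poly_circulant : char_poly circulant = \prod_(k < n) ('X - (circ_eigen k)%:P).
Proof.
pose Dg := diag_mx (\row_(k < n) circ_eigen k).
have -> : \prod_(k < n) ('X - (circ_eigen k)%:P) = char_poly Dg.
  rewrite char_poly_trig ?diag_mx_is_trig //.
  by apply: eq_bigr => k _; rewrite !mxE eqxx mulr1n.
pose P := map_mx (@polyC algC) dft_mx.
have intertwine : char_poly_mx circulant *m P = P *m char_poly_mx Dg.
  by rewrite /char_poly_mx mulmxBl mulmxBr scalar_mxC -!map_mxM circulant_dft.
have detP_neq0 : \det P != 0.
  by rewrite det_map_mx polyC_eq0 -unitfE -unitmxE dft_unitmx.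
apply: (mulIf detP_neq0).
by rewrite /char_poly -!det_mulmx intertwine det_mulmx mulrC det_mulmx.
Qed.

Lemma mup_circulant x : mup x (char_poly circulant) = (\sum_(k < n) (circ_eigen k == x))%N.
Proof.
rewrite char_poly_circulant.
rewrite -(big_map (fun k : 'I_n => circ_eigen k) xpredT (fun y => 'X - y%:P)).
rewrite mu_prod_XsubC count_map -sum1_count big_mkcond /=.
by apply: eq_bigr => k _; rewrite /in_mem /=; case: eqP.
Qed.

Lemma circ_eigen0 : circ_eigen 0 = \sum_(t < n) g t.
Proof. by apply: eq_bigr => t _; rewrite muln0 mulr1. Qed.

Lemma prim_root_half h : n = h.*2 -> w ^+ h = -1.
Proof.
move=> n_eq; have h_gt0 : (0 < h)%N by move: n_gt0; rewrite n_eq double_gt0.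
have : (w ^+ h) ^+ 2 == 1 by rewrite -exprM muln2 -n_eq prim_expr_order.
rewrite sqrf_eq1 => /orP[|/eqP //].
rewrite -(expr0 w) (eq_prim_root_expr w_prim) mod0n modn_small; last lia.
by rewrite eqn0Ngt h_gt0.
Qed.

Lemma circ_eigen_half h : n = h.*2 -> circ_eigen h = \sum_(t < n) g t * (-1) ^+ t.
Proof.
by move=> n_eq; apply: eq_bigr => t _; rewrite mulnC exprM (prim_root_half n_eq).
Qed.

Lemma norm_circ_eigen_le k : (forall t, 0 <= g t) -> `|circ_eigen k| <= circ_eigen 0.
Proof.
move=> g_ge0; rewrite circ_eigen0; apply: le_trans (ler_norm_sum _ _ _) _.
have norm_w : `|w| = 1.
  by apply/eqP; rewrite -(pexpr_eq1 n_gt0) // -normrX prim_expr_order // normr1.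
by apply: ler_sum => t _; rewrite normrM normrX norm_w expr1n mulr1 ger0_norm.
Qed.

Lemma mup_circ_eigen_gt0 (k : 'I_n) : (0 < mup (circ_eigen k) (char_poly circulant))%N.
Proof. by rewrite mup_circulant (bigD1 k) //= eqxx. Qed.

Lemma root_char_poly_circulant_le x : (forall t, 0 <= g t) ->
  (0 < mup x (char_poly circulant))%N -> `|x| <= circ_eigen 0.
Proof.
move=> g_ge0; rewrite mup_circulant.
have [k /eqP <- _|no_k] := pickP (fun k : 'I_n => circ_eigen k == x).
  exact: norm_circ_eigen_le.
by rewrite big1 // => k _; rewrite no_k.
Qed.

Hypothesis g_sym : circ_symmetric n g.

Lemma circ_eigen_subn k : (k <= n)%N -> circ_eigen (n - k) = circ_eigen k.
Proof.
move=> le_kn; pose neg (t : 'I_n) : 'I_n := Ordinal (ltn_pmod (n - t) n_gt0).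
have negK : involutive neg.
  move=> t; apply: val_inj => /=; have [->|t_gt0] := posnP t; first by rewrite subn0 modnn subn0 modnn.
  have lt_nt_n : (n - t < n)%N by lia.
  by rewrite (modn_small lt_nt_n) subKn ?modn_small // ltnW.
rewrite /circ_eigen (reindex_inj (inv_inj negK)); apply: eq_bigr => t _ /=.
rewrite g_sym //; congr (_ * _); apply/eqP.
rewrite (eq_prim_root_expr w_prim) modnMml -(eqn_modDr (t * (n - k))).
by rewrite -mulnDl -mulnDr subnK ?subnKC // 1?ltnW // modnMl modnMr.
Qed.

(* Eigenvalues come in pairs l_k = l_(n-k), except for k = 0 and k = n/2. *)
Lemma odd_mup_circulant h x : n = h.*2 ->
  odd (mup x (char_poly circulant)) = odd ((circ_eigen 0 == x) + (circ_eigen h == x))%N.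
Proof.
move=> n_eq; rewrite mup_circulant -(big_mkord xpredT (fun k => (circ_eigen k == x) : nat)).
rewrite [in LHS]n_eq big_mkord (@odd_sum_sym (fun k => (circ_eigen k == x) : nat) h) // => k.
by rewrite -n_eq => le_kn; rewrite circ_eigen_subn.
Qed.

End Circulant.

Lemma isospectral_circ_eigen0 n (w : algC) (g1 g2 : nat -> algC) : n.-primitive_root w ->
  (forall t, 0 <= g1 t) -> (forall t, 0 <= g2 t) ->
  isospectral (circulant n g1) (circulant n g2) ->
  circ_eigen n w g1 0 = circ_eigen n w g2 0.
Proof.
move=> w_prim g1_ge0 g2_ge0 iso; have n_gt0 := prim_order_gt0 w_prim.
have le_eigen0 (ga gb : nat -> algC) : (forall t, 0 <= ga t) -> (forall t, 0 <= gb t) ->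
    isospectral (circulant n ga) (circulant n gb) ->
    circ_eigen n w ga 0 <= circ_eigen n w gb 0.
  move=> ga_ge0 gb_ge0 iso_ab.
  have eigen0_ge0 : 0 <= circ_eigen n w ga 0 by rewrite circ_eigen0 sumr_ge0.
  rewrite -(ger0_norm eigen0_ge0); apply: (root_char_poly_circulant_le n_gt0 w_prim) => //.
  by rewrite -iso_ab (mup_circ_eigen_gt0 _ n_gt0 w_prim (Ordinal n_gt0)).
by apply/le_anti; rewrite !le_eigen0 // => x; rewrite iso.
Qed.

Lemma isospectral_circ_eigen_half n (w : algC) (g1 g2 : nat -> algC) h :
  n.-primitive_root w -> n = h.*2 ->
  circ_symmetric n g1 -> circ_symmetric n g2 ->
  isospectral (circulant n g1) (circulant n g2) ->
  circ_eigen n w g1 0 = circ_eigen n w g2 0 ->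
  circ_eigen n w g1 h = circ_eigen n w g2 h.
Proof.
move=> w_prim n_eq g1_sym g2_sym iso eigen0_eq; have n_gt0 := prim_order_gt0 w_prim.
apply: (@eq_of_odd_indicator _ (circ_eigen n w g1 0)) => x.
rewrite -(odd_mup_circulant n_gt0 w_prim g1_sym x n_eq) eigen0_eq.
by rewrite -(odd_mup_circulant n_gt0 w_prim g2_sym x n_eq) iso.
Qed.

Definition ICG_weight (n : nat) (D : pred nat) (t : nat) : algC := (D (gcdn t n) : nat)%:R.

Lemma ICG_adj_circulant n D : ICG_adj n D = circulant n (ICG_weight n D).
Proof. by apply/matrixP => i j; rewrite !mxE. Qed.

Lemma ICG_weight_sym n D : circ_symmetric n (ICG_weight n D).
Proof.
move=> t lt_tn; rewrite /ICG_weight; have [->|t_gt0] := posnP t; first by rewrite subn0 modnn.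
rewrite modn_small; last lia.
have n_eq : n = (n - t + t)%N by rewrite subnK // ltnW.
set m := (n - t)%N in n_eq *.
by rewrite n_eq gcdnDl gcdnDr gcdnC.
Qed.

Lemma circ_eigen0_ICG n (w : algC) D :
  circ_eigen n w (ICG_weight n D) 0 = (nbrs_count n D negb + nbrs_count n D id)%:R.
Proof.
rewrite circ_eigen0 /nbrs_count -big_split natr_sum; apply: eq_bigr => t _ /=.
by rewrite /ICG_weight; case: (D _); case: (odd t).
Qed.

Lemma circ_eigen_half_ICG n (w : algC) D h : n.-primitive_root w -> n = h.*2 ->
  circ_eigen n w (ICG_weight n D) h = (nbrs_count n D negb)%:R - (nbrs_count n D id)%:R.
Proof.
move=> w_prim n_eq; rewrite (circ_eigen_half _ (prim_order_gt0 w_prim) w_prim n_eq).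
rewrite /nbrs_count !natr_sum -sumrB; apply: eq_bigr => t _.
rewrite -signr_odd /ICG_weight; case: (D _); case: (odd t);
  by rewrite /= ?mulr1n ?mulr0n ?expr0 ?expr1 ?mul1r ?mul0r ?subr0 ?sub0r ?oppr0.
Qed.

Lemma eq_of_sum_diff_natr (R : numDomainType) (a b c d : nat) : (a + b = c + d)%N ->
  a%:R - b%:R = c%:R - d%:R :> R -> a = c /\ b = d.
Proof.
move=> sum_eq /eqP; rewrite subr_eq addrAC eq_sym subr_eq -!natrD eqr_nat => /eqP.
lia.
Qed.

Lemma isospectral_ICG_nbrs_count n D1 D2 : (0 < n)%N -> ~~ odd n ->
  isospectral (ICG_adj n D1) (ICG_adj n D2) ->
  nbrs_count n D1 negb = nbrs_count n D2 negb /\ nbrs_count n D1 id = nbrs_count n D2 id.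
Proof.
move=> n_gt0 n_even; rewrite !ICG_adj_circulant => iso.
have [w w_prim] := C_prim_root_exists n_gt0.
have n_eq : n = n./2.*2 by rewrite -{1}(odd_double_half n) (negbTE n_even).
have weight_ge0 D t : 0 <= ICG_weight n D t by apply: ler0n.
have eigen0_eq := isospectral_circ_eigen0 w_prim (weight_ge0 D1) (weight_ge0 D2) iso.
have := isospectral_circ_eigen_half w_prim n_eq
  (@ICG_weight_sym n D1) (@ICG_weight_sym n D2) iso eigen0_eq.
move: eigen0_eq; rewrite !circ_eigen0_ICG !(circ_eigen_half_ICG _ w_prim n_eq).
by move=> /eqP; rewrite eqr_nat => /eqP; apply: eq_of_sum_diff_natr.
Qed.

Lemma proper_divisor_set_dvdn n D d : proper_divisor_set n D -> D d -> (d %| n)%N.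
Proof. by move=> D_proper /D_proper /andP[]. Qed.

Theorem corollary2p7 (n : nat) (D1 D2 : pred nat) :
  (1 <= n)%N -> ~~ odd n ->
  proper_divisor_set n D1 -> proper_divisor_set n D2 ->
  isospectral (ICG_adj n D1) (ICG_adj n D2) ->
  (\sum_(d < n.+1 | D1 d && odd d) totient (n %/ d)
     = \sum_(d < n.+1 | D2 d && odd d) totient (n %/ d))%N /\
  (\sum_(d < n.+1 | D1 d && ~~ odd d) totient (n %/ d)
     = \sum_(d < n.+1 | D2 d && ~~ odd d) totient (n %/ d))%N.
Proof.
move=> n_gt0 n_even D1_proper D2_proper iso.
have [even_eq odd_eq] := isospectral_ICG_nbrs_count n_gt0 n_even iso.
have totient_sum_eq Q : nbrs_count n D1 Q = nbrs_count n D2 Q ->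
    \sum_(d < n.+1 | D1 d && Q (odd d)) totient (n %/ d) =
    \sum_(d < n.+1 | D2 d && Q (odd d)) totient (n %/ d).
  by rewrite !sum_totient_gcdn // => d; apply: proper_divisor_set_dvdn.
by split; [exact: (totient_sum_eq id) | exact: (totient_sum_eq negb)].
Qed.
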